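(* Let $\alpha,\beta$ be parameters, $q$ an indeterminate, and $E_n(x;q)=\sum_{k=0}^nE_{n,k}(\alpha,\beta,q)x^k$ with $E_{n,k}$ as in the context. For $n\geq 1$, \[ E_{n}(1;q)=\prod_{i=0}^{n-1}[\alpha+\beta+i]. \]
   Context: For real $x$, $[x]=\frac{1-q^x}{1-q}$. The numbers $E_{n,k}(\alpha,\beta,q)$ are determined by $E_{0,0}=1$, $E_{n,k}=0$ if $k\notin\{0,\dots,n\}$, and for $n\ge1$: $E_{n,k}(\alpha,\beta,q)=q^{\beta+k-1}[n-k+\alpha]E_{n-1,k-1}(\alpha,\beta,q)+[k+\beta]E_{n-1,k}(\alpha,\beta,q)$. *)

From Stdlib Require Export Reals.
Open Scope R_scope.

Definition qnum (q x : R) : R := (1 - Rpower q x) / (1 - q).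

(* E_{0,0} = 1, E_{0,k} = 0 for k <> 0;
   E_{n,k} = q^(beta+k-1) [n-k+alpha] E_{n-1,k-1} + [k+beta] E_{n-1,k},
   where the first term is absent for k = 0 (E_{n-1,-1} = 0). *)
Fixpoint E (alpha beta q : R) (n : nat) (k : nat) : R :=
  match n with
  | O => match k with O => 1 | _ => 0 end
  | S m =>
      match k with
      | O => qnum q (INR 0 + beta) * E alpha beta q m 0
      | S j => Rpower q (beta + INR k - 1) * qnum q (INR n - INR k + alpha)
                 * E alpha beta q m j
               + qnum q (INR k + beta) * E alpha beta q m k
      end
  end.

(* E_n(x; q) = sum_{k=0}^n E_{n,k} x^k  (sum_f_R0 f n = f 0 + ... + f n). *)
Definition Epoly (alpha beta q : R) (n : nat) (x : R) : R :=
  sum_f_R0 (fun k => E alpha beta q n k * x ^ k) n.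

Fixpoint Rprod (n : nat) (f : nat -> R) : R :=
  match n with
  | O => 1
  | S m => Rprod m f * f m
  end.

(* At x = 1 the recursion sends E_{m,j} to row m+1 with total weight
   q^(beta+j) [m-j+alpha] + [j+beta] = [alpha+beta+m], which does not depend
   on j.  Hence each row sum is the previous one times [alpha+beta+m]. *)

From Stdlib Require Import Reals Lra Lia.
Open Scope R_scope.

Lemma qnum_add (q a b : R) :
  q <> 1 -> Rpower q a * qnum q b + qnum q a = qnum q (a + b).
Proof.
  intros hq1; unfold qnum; rewrite Rpower_plus.
  field; lra.
Qed.

Section Triangle.

Variables alpha beta q : R.

Lemma E_above_diag (n k : nat) : (n < k)%nat -> E alpha beta q n k = 0.
Proof.
  revert k; induction n as [|m IH]; intros k hnk.
  - destruct k; [lia | reflexivity].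
  - destruct k as [|j]; [lia |]; simpl E.
    rewrite (IH j), (IH (S j)) by lia; ring.
Qed.

Lemma E_succ_succ (m j : nat) :
  E alpha beta q (S m) (S j) =
    Rpower q (beta + INR j) * qnum q (INR m - INR j + alpha) * E alpha beta q m j
    + qnum q (INR (S j) + beta) * E alpha beta q m (S j).
Proof.
  unfold E at 1; fold E.
  replace (beta + INR (S j) - 1) with (beta + INR j) by (rewrite S_INR; ring).
  replace (INR (S m) - INR (S j) + alpha) with (INR m - INR j + alpha)
    by (rewrite !S_INR; ring).
  reflexivity.
Qed.

Lemma Epoly_at_1 (n : nat) :
  Epoly alpha beta q n 1 = sum_f_R0 (E alpha beta q n) n.
Proof. apply sum_eq; intros k _; rewrite pow1; ring. Qed.

Lemma Epoly_at_1_succ (m : nat) :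
  q <> 1 ->
  Epoly alpha beta q (S m) 1 = Epoly alpha beta q m 1 * qnum q (alpha + beta + INR m).
Proof.
  intros hq1; rewrite !Epoly_at_1.
  set (A := fun j => Rpower q (beta + INR j) * qnum q (INR m - INR j + alpha)
                     * E alpha beta q m j).
  set (B := fun k => qnum q (INR k + beta) * E alpha beta q m k).
  assert (split_row : sum_f_R0 (E alpha beta q (S m)) (S m)
                   = sum_f_R0 A m + (B 0%nat + sum_f_R0 (fun j => B (S j)) m)).
  { rewrite decomp_sum by lia; simpl pred.
    rewrite (sum_eq _ (fun j => A j + B (S j))) by (intros j _; apply E_succ_succ).
    rewrite plus_sum; unfold B; unfold E at 1; fold E; ring. }
  assert (shift_B : B 0%nat + sum_f_R0 (fun j => B (S j)) m = sum_f_R0 B m).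
  { transitivity (sum_f_R0 B (S m)).
    - rewrite (decomp_sum B (S m)) by lia; reflexivity.
    - rewrite tech5; unfold B at 2; rewrite E_above_diag by lia; ring. }
  rewrite split_row, shift_B, <- plus_sum, Rmult_comm, scal_sum.
  apply sum_eq; intros j _; unfold A, B.
  replace (alpha + beta + INR m) with (beta + INR j + (INR m - INR j + alpha)) by ring.
  replace (INR j + beta) with (beta + INR j) by ring.
  rewrite <- (qnum_add q (beta + INR j) (INR m - INR j + alpha)) by exact hq1; ring.
Qed.

End Triangle.

Theorem corollary3p3 (alpha beta q : R) (hq0 : 0 < q) (hq1 : q <> 1) (n : nat) :
  (1 <= n)%nat ->
  Epoly alpha beta q n 1 = Rprod n (fun i => qnum q (alpha + beta + INR i)).
Proof.
  intros _.
  induction n as [|m IH].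
  - rewrite Epoly_at_1; simpl; ring.
  - rewrite Epoly_at_1_succ, IH by exact hq1; reflexivity.
Qed.
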